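(* Let $n\ge 1$ and let $\mathcal{V}\subseteq\{0,1\}^n$ be a set of indicator vectors. Suppose that the primal shatter function of $\mathcal{V}$ has the $(d,d_1)$ Clarkson–Shor property for a fixed integer $d>0$ and a real $1\le d_1\le d$, with a fixed constant $C>0$. That is, for every index set $I\subseteq[n]$ with $|I|=m\le n$ and every integer $1\le k'\le m$, the number of vectors of $\mathcal{V}_{|_I}$ of length at most $k'$ is at most $C m^{d_1}k'^{\,d-d_1}$. Let $d_0$ be the VC-dimension of $\mathcal{V}$. Let $\delta$ be an integer with $1\le\delta\le n/2^{(d_0+1)}$, and let $k$ be an integer with $1\le k\le n$ and $k\ge\delta/2$. Then $$\mathcal{M}(\delta,k,\mathcal{V})=O\!\left(\frac{n^{d_1}k^{d-d_1}}{\delta^d}\right).$$ Here $\mathcal{M}(\delta,k,\mathcal{V})$ is the maximum cardinality of a $\delta$-separated subset of $\mathcal{V}$ all of whose vectors have length at most $k$. The constant of proportionality depends on $d$ (with $d_0$ and $C$ regarded as fixed) and not on $n$, $k$ or $\delta$.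
   Context: For $\mathbf{v}\in\{0,1\}^n$, its length is $\|\mathbf{v}\|=\sum_i|\mathbf{v}_i|$. The distance between two vectors is $\rho(\mathbf{u},\mathbf{v})=\sum_i|\mathbf{u}_i-\mathbf{v}_i|$, i.e. the Hamming distance. A set $\mathcal{W}$ of vectors is $\delta$-separated if $\rho(\mathbf{u},\mathbf{v})>\delta$ for all distinct $\mathbf{u},\mathbf{v}\in\mathcal{W}$. For a sequence of indices $I=(i_1,\dots,i_m)$, the projection is $\mathcal{V}_{|_I}=\{(\mathbf{v}_{i_1},\dots,\mathbf{v}_{i_m}):\mathbf{v}\in\mathcal{V}\}$, a set of distinct vectors. The primal shatter function is $\pi_{\mathcal{V}}(m)=\max_{|I|=m}|\mathcal{V}_{|_I}|$. An index sequence $I$ is shattered if $\mathcal{V}_{|_I}=\{0,1\}^{|I|}$. The VC-dimension $d_0$ is the largest size of a shattered sequence. *)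

From Stdlib Require Import Reals.
From mathcomp Require Import all_boot.

Set Implicit Arguments. Unset Strict Implicit. Unset Printing Implicit Defensive.

(* A vector v in {0,1}^n is represented by its support, a set {set 'I_n}. *)
Section Defs.
Variable n : nat.

Definition vlen (v : {set 'I_n}) : nat := #|v|.

Definition hdist (u v : {set 'I_n}) : nat := #|(u :\: v) :|: (v :\: u)|.

Definition separated (delta : nat) (W : {set {set 'I_n}}) : bool :=
  [forall u in W, forall v in W, (u != v) ==> (delta < hdist u v)].

Definition proj (V : {set {set 'I_n}}) (I : {set 'I_n}) : {set {set 'I_n}} :=
  [set v :&: I | v in V].

Definition shattered (V : {set {set 'I_n}}) (I : {set 'I_n}) : bool :=
  proj V I == powerset I.

Definition vcdim (V : {set {set 'I_n}}) : nat :=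
  \max_(I : {set 'I_n} | shattered V I) #|I|.

Definition Mpack (delta k : nat) (V : {set {set 'I_n}}) : nat :=
  \max_(W : {set {set 'I_n}} |
          (W \subset V) && separated delta W && [forall v in W, vlen v <= k])
     #|W|.

Local Open Scope R_scope.
Definition clarkson_shor (V : {set {set 'I_n}}) (d : nat) (d1 C : R) : Prop :=
  forall (I : {set 'I_n}) (k' : nat), (1 <= k')%N -> (k' <= #|I|)%N ->
    Rle (INR #|[set u in proj V I | (vlen u <= k')%N]|)
        (C * Rpower (INR #|I|) d1 * Rpower (INR k') (INR d - d1)).

End Defs.

From Stdlib Require Import Reals Lra.
From mathcomp Require Import all_boot zify.

Set Implicit Arguments. Unset Strict Implicit. Unset Printing Implicit Defensive.

(* Let W be a largest delta-separated subfamily of V of vectors of length at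
   most k, and sample a uniformly random m-subset I of the coordinates, with
   m about 4 d0 n / delta.  Two members of W with the same trace on I differ in
   more than delta coordinates outside I, so the fibers of W over I carry edges
   of total weight at least delta (|W| - |W_I|) / 2 in directions outside I,
   whereas Haussler's shifting argument bounds the total edge weight of W on
   any (m+1)-set of coordinates by d0 |W|.  Double counting gives, on average,
   |W_I| >= |W| / 2.  A trace has expected length at most m k / n, so by Markov
   at most |W| / 4 traces are longer than k' ~ 4 m k / n; hence some I has at
   least |W| / 4 traces of length at most k', and the Clarkson-Shor property
   bounds their number by C m^d1 k'^(d-d1) = O(n^d1 k^(d-d1) / delta^d).  For
   delta <= 4 d0 the whole coordinate set serves as the sample. *)

Lemma sum_mem_card (T : finType) (A B : {set T}) :
  \sum_(x in A) (x \in B : nat) = #|A :&: B|.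
Proof.
rewrite -sum1_card big_mkcond [RHS]big_mkcond /=.
by apply: eq_bigr => x _; rewrite inE; case: (x \in A); case: (x \in B).
Qed.

Lemma sum_mem_cardT (T : finType) (B : {set T}) : \sum_x (x \in B : nat) = #|B|.
Proof. by rewrite -[in RHS](setTI B) -sum_mem_card; apply: eq_bigl => x; rewrite inE. Qed.

Lemma exists_ge_average (T : finType) (A : {set T}) (f : T -> nat) x :
  0 < #|A| -> #|A| * x <= \sum_(i in A) f i -> exists2 i, i \in A & x <= f i.
Proof.
move=> A_gt0 le_avg.
have [/exists_inP [i iA hi]|/exists_inPn lt_x] := boolP [exists i in A, x <= f i].
  by exists i.
have [i /lt_x] : exists i, i \in A by apply/set0Pn; rewrite -card_gt0.
rewrite -ltnNge; case: x le_avg lt_x => // x le_avg lt_x _.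
have : \sum_(i in A) f i <= #|A| * x.
  by rewrite -sum_nat_const leq_sum // => j /lt_x; rewrite -ltnNge.
by move/(leq_trans le_avg); rewrite leq_pmul2l // ltnn.
Qed.

Section Traces.

Variable n : nat.
Implicit Types (V W : {set {set 'I_n}}) (A I J K S T v w x y : {set 'I_n}).

Lemma setI_eqP x y A : reflect {in A, x =i y} (x :&: A == y :&: A).
Proof.
apply: (iffP eqP) => [E i iA|E].
  by move/setP/(_ i): E; rewrite !inE iA !andbT.
by apply/setP => i; rewrite !inE; case iA: (i \in A); rewrite ?andbF ?andbT ?E.
Qed.

Lemma setI_eq_setD1 x y J j : j \in J ->
  (x :&: J == y :&: J) = (x :&: (J :\ j) == y :&: (J :\ j)) && ((j \in x) == (j \in y)).
Proof.
move=> jJ; apply/setI_eqP/andP => [E|[/setI_eqP E /eqP Ej] i iJ].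
  by split; [apply/setI_eqP => i /setD1P [_]; apply: E | rewrite E].
by case: (eqVneq i j) => [->|ij] //; apply: E; rewrite !inE ij.
Qed.

Lemma setU1D1_eq v (m : 'I_n) : ((m |: v) :\ m == v) = (m \notin v).
Proof.
case mv: (m \in v); last by rewrite setU1K ?mv ?eqxx.
by apply/negbTE; apply: contraTneq mv => <-; rewrite !inE eqxx.
Qed.

Lemma shatteredP W S :
  reflect (forall T, T \subset S -> exists2 w, w \in W & w :&: S = T) (shattered W S).
Proof.
rewrite /shattered eqEsubset.
have -> : proj W S \subset powerset S.
  by apply/subsetP => u /imsetP [v _ ->]; rewrite powersetE subsetIr.
apply: (iffP subsetP) => /= [sh T TS|sh T].
  by have /imsetP [w wW ->] := sh T (etrans (powersetE _ _) TS); exists w.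
by rewrite powersetE => /sh [w wW <-]; apply/imsetP; exists w.
Qed.

Lemma shattered_subset W1 W S : W1 \subset W -> shattered W1 S -> shattered W S.
Proof.
move=> sW /shatteredP sh; apply/shatteredP => T /sh [w wW <-].
by exists w => //; apply: (subsetP sW).
Qed.

Lemma shattered_set0 W : W != set0 -> shattered W set0.
Proof.
case/set0Pn => w wW; apply/shatteredP => T; rewrite subset0 => /eqP ->.
by exists w; rewrite ?setI0.
Qed.

Definition ones (j : 'I_n) := [set w : {set 'I_n} | j \in w].

Definition fiber W K v := [set w in W | w :&: K == v].

Lemma card_fibers W K : #|W| = \sum_v #|fiber W K v|.
Proof.
rewrite -sum1_card (partition_big (fun w => w :&: K) xpredT) //=.
by apply: eq_bigr => v _; rewrite -sum1_card; apply: eq_bigl => w; rewrite inE.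
Qed.

Lemma setI_set1 w (m : 'I_n) : w :&: [set m] = if m \in w then [set m] else set0.
Proof.
case: ifP => mw; apply/setP => i; rewrite !inE; case: eqP => [->|]; by rewrite ?mw ?andbF.
Qed.

Lemma fiber_setU1_ones W K v (m : 'I_n) : m \notin K -> m \notin v ->
  fiber W (m |: K) (m |: v) = fiber W K v :&: ones m.
Proof.
move=> mK mv; apply/setP => w; rewrite !inE setIUr setI_set1; case: (w \in W); rewrite ?andbF //=.
have mwK : m \notin w :&: K by rewrite inE (negbTE mK) andbF.
case: (m \in w); rewrite /= ?andbT ?andbF ?set0U.
  by apply/eqP/eqP => [E|->] //; rewrite -(setU1K mwK) E setU1K.
by apply: contraNF mwK => /eqP ->; rewrite setU11.
Qed.

Lemma fiber_setU1_ones_compl W K v (m : 'I_n) : m \notin K -> m \notin v ->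
  fiber W (m |: K) v = fiber W K v :\: ones m.
Proof.
move=> mK mv; apply/setP => w; rewrite !inE setIUr setI_set1; case: (w \in W); rewrite ?andbF //=.
case: (m \in w); rewrite /= ?andbT ?andbF ?set0U //.
by apply/negbTE; apply: contraNneq mv => <-; apply: setU11.
Qed.

Lemma fiber_subset W' W K v : W' \subset W -> fiber W' K v = fiber W K v :&: W'.
Proof.
move=> sW; apply/setP => w; rewrite !inE; case wW': (w \in W'); rewrite ?andbF ?andbT //.
by rewrite (subsetP sW).
Qed.

Lemma fiber_setD W W' K v : fiber (W :\: W') K v = fiber W K v :\: W'.
Proof. by apply/setP => w; rewrite !inE andbA. Qed.

Lemma fiber_setU1 W K (j : 'I_n) w : j \notin K ->
  fiber W (j |: K) (w :&: (j |: K)) =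
  [set x in fiber W K (w :&: K) | (j \in x) == (j \in w)].
Proof.
by move=> jK; apply/setP => x; rewrite !inE (setI_eq_setD1 _ _ (setU11 j K)) setU1K // andbA.
Qed.

(** * Haussler's shifting *)

(* For [j \notin K], a fiber of [W] over [K] whose two halves with respect to
   coordinate [j] are nonempty is an edge of direction [j] of the one-inclusion
   graph of [W] on [j |: K]; it is weighted by its smaller half. *)
Definition split_count W K (j : 'I_n) :=
  \sum_v minn #|fiber W K v :&: ones j| #|fiber W K v :\: ones j|.

Definition edge_count W J := \sum_(j in J) split_count W (J :\ j) j.

(* Haussler's shifting: in every fiber over [J], the smaller half with respect
   to coordinate [m] (on a tie, the half of the [w] with [m \in w]). *)
Definition minority W J (m : 'I_n) :=
  [set w in W | let F := fiber W J (w :&: J) in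
                (m \in w) == (#|F :&: ones m| <= #|F :\: ones m|)].

Lemma minority_sub W J m : minority W J m \subset W.
Proof. by apply/subsetP => w; rewrite inE => /andP []. Qed.

Lemma card_setI_minority W J (m : 'I_n) (B : {set {set 'I_n}}) :
  {in B, forall w, fiber W J (w :&: J) = B} ->
  #|B :&: minority W J m| = minn #|B :&: ones m| #|B :\: ones m|.
Proof.
move=> clB.
have memB w : w \in B ->
    (w \in minority W J m) = ((m \in w) == (#|B :&: ones m| <= #|B :\: ones m|)).
  move=> wB; have : w \in fiber W J (w :&: J) by rewrite clB.
  by rewrite !inE /= clB // => /andP [-> _].
case: leqP memB => hc memB; apply: eq_card => w;
  rewrite ?in_setD !in_setI; case wB: (w \in B); rewrite ?andbF //= memB // inE.
  by rewrite eqb_id.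
by rewrite eqbF_neg andbT.
Qed.

Lemma card_setD_minority W J (m : 'I_n) (B : {set {set 'I_n}}) :
  {in B, forall w, fiber W J (w :&: J) = B} ->
  #|B :\: minority W J m| = maxn #|B :&: ones m| #|B :\: ones m|.
Proof.
move=> clB; have := cardsID (minority W J m) B; have := cardsID (ones m) B.
rewrite (card_setI_minority _ clB).
by move: #|B :&: ones m| #|B :\: ones m| #|B| #|B :\: minority W J m|; lia.
Qed.

Lemma fiber_class W J v : {in fiber W J v, forall w, fiber W J (w :&: J) = fiber W J v}.
Proof. by move=> w; rewrite inE => /andP [_ /eqP ->]. Qed.

Lemma card_minority W J m : #|minority W J m| = split_count W J m.
Proof.
rewrite (card_fibers _ J); apply: eq_bigr => v _.
by rewrite (fiber_subset _ _ (minority_sub W J m)) card_setI_minority //; apply: fiber_class.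
Qed.

Lemma minority_fiber_split W J m w (b : bool) : w \in minority W J m ->
  exists2 x, x \in fiber W J (w :&: J) & (m \in x) = b.
Proof.
rewrite inE /= => /andP [wW hw]; set F := fiber W J (w :&: J).
have wF : w \in F by rewrite inE wW eqxx.
have [<-|mwb] := eqVneq (m \in w) b; first by exists w.
have [x] : exists x, x \in if b then F :&: ones m else F :\: ones m.
  apply/set0Pn; rewrite -card_gt0.
  case: b mwb; case mw: (m \in w) hw => //= hc _.
    by move: hc; rewrite eq_sym eqbF_neg -ltnNge; apply: leq_ltn_trans.
  move/eqP: hc => /esym hc; apply: leq_trans hc.
  by rewrite card_gt0; apply/set0Pn; exists w; rewrite inE wF inE.
case: b {mwb hw} => [/setIP [xF] | /setDP [xF]]; rewrite inE => xm; exists x => //.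
exact/negbTE.
Qed.

Lemma shattered_minority W J S (m : 'I_n) : m \notin J -> S \subset J ->
  shattered (minority W J m) S -> shattered W (m |: S).
Proof.
move=> mJ SJ /shatteredP sh; apply/shatteredP => T TmS.
have [w2 w2m w2S] := sh (T :\ m) (etrans (subDset _ _ _) TmS).
have [w /[!inE] /andP [wW /eqP wJ] mw] := minority_fiber_split (m \in T) w2m.
exists w => //; apply/setP => i; rewrite !inE.
have [->|im] := eqVneq i m; first by rewrite mw andbT.
have [iS|iS] := boolP (i \in S); last first.
  by rewrite andbF; apply/esym/negbTE; apply: contra iS => /(subsetP TmS); rewrite !inE (negbTE im).
have /setP/(_ i) := wJ; rewrite !inE (subsetP SJ i iS) !andbT => ->.
by move/setP/(_ i): w2S; rewrite !inE im iS andbT.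
Qed.

(* Shifting along [m] does not decrease the weight of the edges of direction [j]. *)
Lemma split_count_setU1 W K (j m : 'I_n) : j \notin K -> m \notin K ->
  split_count W (m |: K) j <=
  split_count (W :\: minority W (j |: K) m) K j + split_count (minority W (j |: K) m) K j.
Proof.
move=> jK mK; set Wm := minority W (j |: K) m; rewrite /split_count (bigID (fun v => m \in v)) /=.
rewrite (reindex_onto (fun v => m |: v) (fun v => v :\ m)) /=; last first.
  by move=> v mv; rewrite setD1K.
under eq_bigl do rewrite setU11 setU1D1_eq /=.
rewrite -!big_split /= [X in _ <= X](bigID (fun v => m \in v)) /=.
apply: leq_trans (leq_addl _ _); apply: leq_sum => v mv.
rewrite fiber_setU1_ones // fiber_setU1_ones_compl // fiber_setD.
rewrite (fiber_subset _ _ (minority_sub _ _ _)) -/Wm; set F := fiber W K v.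
have cl B (b : bool) : B = [set x in F | (j \in x) == b] ->
    {in B, forall w, fiber W (j |: K) (w :&: (j |: K)) = B}.
  by move=> -> w; rewrite inE => /andP [wF /eqP jw]; rewrite fiber_setU1 // (fiber_class wF) jw.
have clI : {in F :&: ones j, forall w, fiber W (j |: K) (w :&: (j |: K)) = F :&: ones j}.
  by apply: (cl _ true); apply/setP => x; rewrite !inE eqb_id andbC.
have clD : {in F :\: ones j, forall w, fiber W (j |: K) (w :&: (j |: K)) = F :\: ones j}.
  by apply: (cl _ false); apply/setP => x; rewrite !inE eqbF_neg andbC.
have eII X : F :&: X :&: ones j = F :&: ones j :&: X by rewrite setIAC.
have eID X : (F :&: X) :\: ones j = (F :\: ones j) :&: X by rewrite !setDE setIAC.
have eDI X : (F :\: X) :&: ones j = (F :&: ones j) :\: X by rewrite !setDE setIAC.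
have eDD X : (F :\: X) :\: ones j = (F :\: ones j) :\: X by rewrite !setDE setIAC.
rewrite !eII !eID !eDI !eDD !card_setI_minority ?card_setD_minority //.
by move: #|F :&: ones j :&: ones m| #|F :&: ones j :\: ones m|
  #|(F :\: ones j) :&: ones m| #|F :\: ones j :\: ones m|; lia.
Qed.

Lemma edge_count_setU1 W J (m : 'I_n) : m \notin J ->
  edge_count W (m |: J) <=
  #|minority W J m| + edge_count (W :\: minority W J m) J + edge_count (minority W J m) J.
Proof.
move=> mJ; rewrite /edge_count big_setU1 //= setU1K // card_minority -addnA leq_add2l.
rewrite -big_split /=; apply: leq_sum => j jJ.
have jm : j != m by apply: contraNneq mJ => <-.
have -> : (m |: J) :\ j = m |: (J :\ j).
  by apply/setP => i; rewrite !inE; case: eqVneq => // ->; rewrite (negbTE jm).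
rewrite -{2 4}(setD1K jJ); apply: split_count_setU1; first by rewrite setD11.
by rewrite inE negb_and mJ orbT.
Qed.

Lemma edge_count_le W J d :
  (forall S, S \subset J -> shattered W S -> #|S| <= d) -> edge_count W J <= d * #|W|.
Proof.
move Jt: #|J| => t; elim: t J Jt d W => [|t IH] J Jt d W vcJ.
  by rewrite /edge_count (cards0_eq Jt) big_set0.
have [m mJ] : exists m, m \in J by apply/set0Pn; rewrite -card_gt0 Jt.
set J' := J :\ m; set Wm := minority W J' m.
have mJ' : m \notin J' by rewrite setD11.
have sJ' : J' \subset J := subD1set J m.
have J't : #|J'| = t by move: (cardsD1 m J); rewrite mJ Jt add1n => -[].
have vcWm S : S \subset J' -> shattered Wm S -> #|S| < d.
  move=> SJ' /(shattered_minority mJ' SJ') sh.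
  have mS : m \notin S by apply: contra mJ'; apply: (subsetP SJ').
  have := vcJ (m |: S); rewrite cardsU1 mS; apply=> //.
  by rewrite subUset sub1set mJ (subset_trans SJ' sJ').
have eD : edge_count (W :\: Wm) J' <= d * #|W :\: Wm|.
  apply: IH => // S SJ' /(shattered_subset (subsetDl W Wm)).
  by apply: vcJ; apply: subset_trans SJ' sJ'.
have eWm : edge_count Wm J' <= d.-1 * #|Wm|.
  by apply: IH => // S SJ' /(vcWm S SJ'); case: d {vcJ vcWm eD}.
have Wm_d : #|Wm| <= d * #|Wm|.
  have [->|/shattered_set0 /(vcWm _ (sub0set _))] := eqVneq Wm set0.
    by rewrite cards0 muln0.
  by rewrite cards0 => /leq_pmull.
have cW : #|W| = #|W :\: Wm| + #|Wm|.
  by rewrite -(cardsID Wm W) (setIidPr (minority_sub W J' m)) addnC.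
rewrite -(setD1K mJ) -/J'; apply: leq_trans (edge_count_setU1 _ mJ') _.
rewrite cW; move: Wm_d eD eWm.
move: #|Wm| #|W :\: Wm| (edge_count (W :\: Wm) J') (edge_count Wm J').
by case: d {vcJ vcWm} => [|d] /=; nia.
Qed.

(** * Separated families *)

Lemma hdistE x y : hdist x y = #|x :\: y| + #|y :\: x|.
Proof.
rewrite /hdist cardsU -[RHS]subn0; congr (_ - _); apply/eqP; rewrite cards_eq0.
by apply/eqP/setP => i; rewrite !inE; case: (i \in x); case: (i \in y); rewrite ?andbF.
Qed.

Lemma separatedP delta W :
  reflect {in W &, forall x y, x != y -> delta < hdist x y} (separated delta W).
Proof.
apply: (iffP forallP) => [sep x y xW yW|sep x].
  by move/implyP/(_ xW)/forallP/(_ y)/implyP/(_ yW)/implyP: (sep x).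
by apply/implyP => xW; apply/forallP => y; apply/implyP => yW; apply/implyP; apply: sep.
Qed.

Lemma sum_card_ones_pairs (A : {set {set 'I_n}}) :
  \sum_(j : 'I_n) #|A :&: ones j| * #|A :\: ones j| =
  \sum_(x in A) \sum_(y in A) #|x :\: y|.
Proof.
have cardI j : #|A :&: ones j| = \sum_(x in A) (j \in x : nat).
  by rewrite -sum_mem_card; apply: eq_bigr => x _; rewrite inE.
have cardD j : #|A :\: ones j| = \sum_(y in A) (j \notin y : nat).
  by rewrite setDE -sum_mem_card; apply: eq_bigr => y _; rewrite !inE.
rewrite (eq_bigr (fun j => \sum_(x in A) \sum_(y in A) ((j \in x) * (j \notin y)))); last first.
  by move=> j _; rewrite cardI cardD big_distrl; apply: eq_bigr => x _; rewrite big_distrr.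
rewrite exchange_big; apply: eq_bigr => x _; rewrite exchange_big; apply: eq_bigr => y _.
rewrite -sum_mem_cardT; apply: eq_bigr => j _.
by rewrite !inE; case: (j \in x); case: (j \in y).
Qed.

Lemma sum_hdist (A : {set {set 'I_n}}) :
  \sum_(x in A) \sum_(y in A) hdist x y = 2 * \sum_(x in A) \sum_(y in A) #|x :\: y|.
Proof.
under eq_bigr do under eq_bigr do rewrite hdistE.
under eq_bigr do rewrite big_split /=.
by rewrite big_split /= [X in _ + X = _]exchange_big /= addnn mul2n.
Qed.

Lemma separated_class_bound delta (A : {set {set 'I_n}}) :
  {in A &, forall x y, x != y -> delta < hdist x y} ->
  delta * (#|A| - 1) <= 2 * \sum_(j : 'I_n) minn #|A :&: ones j| #|A :\: ones j|.
Proof.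
move=> sep; have [->|Apos] := posnP #|A|; first by rewrite muln0.
rewrite -(leq_pmul2l Apos).
have pair_sum : #|A| * ((#|A| - 1) * delta.+1) <= \sum_(x in A) \sum_(y in A) hdist x y.
  rewrite -sum_nat_const; apply: leq_sum => x xA.
  have -> : #|A| - 1 = #|A :\ x| by rewrite (cardsD1 x A) xA add1n subn1.
  rewrite (bigD1 x) //= -sum_nat_const; apply: leq_trans (leq_addl _ _).
  rewrite [X in X <= _](eq_bigl (fun y => (y \in A) && (y != x))) => [|y]; last first.
    by rewrite !inE andbC.
  by apply: leq_sum => y /andP [yA yx]; apply: sep; rewrite // eq_sym.
have prod_min j : #|A :&: ones j| * #|A :\: ones j| <=
    #|A| * minn #|A :&: ones j| #|A :\: ones j|.
  rewrite -(cardsID (ones j) A); case: (leqP #|A :&: ones j| #|A :\: ones j|) => _.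
    by rewrite mulnC mulnDl leq_addl.
  by rewrite mulnDl leq_addr.
apply: leq_trans (_ : #|A| * ((#|A| - 1) * delta.+1) <= _); first by nia.
apply: (leq_trans pair_sum); rewrite sum_hdist -sum_card_ones_pairs mulnCA leq_mul2l.
by rewrite big_distrr /= leq_sum ?orbT.
Qed.

Lemma split_count_in W I j : j \in I -> split_count W I j = 0.
Proof.
move=> jI; rewrite /split_count big1 // => v _.
have jw w : w \in fiber W I v -> (j \in w) = (j \in v).
  by rewrite inE => /andP [_ /eqP <-]; rewrite inE jI andbT.
case jv: (j \in v).
  suff -> : fiber W I v :\: ones j = set0 by rewrite cards0 minn0.
  by apply/eqP; rewrite -subset0; apply/subsetP => w /setDP [/jw]; rewrite inE jv => ->.
suff -> : fiber W I v :&: ones j = set0 by rewrite cards0 min0n.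
by apply/eqP; rewrite -subset0; apply/subsetP => w /setIP [/jw]; rewrite inE jv => ->.
Qed.

Lemma separated_proj_lower delta W I : separated delta W ->
  delta * (#|W| - #|proj W I|) <= 2 * \sum_(j | j \notin I) split_count W I j.
Proof.
move=> /separatedP sep.
have -> : \sum_(j | j \notin I) split_count W I j = \sum_j split_count W I j.
  rewrite [RHS](bigID (mem I)) /= [X in _ = X + _]big1 ?add0n // => j.
  exact: split_count_in.
rewrite /split_count exchange_big /= big_distrr /=.
have cardP : #|proj W I| = \sum_v (#|fiber W I v| != 0 : nat).
  rewrite -sum_mem_cardT; apply: eq_bigr => v _.
  congr (nat_of_bool _); apply/imsetP/idP => [[w wW ->]|].
    by rewrite cards_eq0; apply/set0Pn; exists w; rewrite inE wW eqxx.
  by rewrite cards_eq0 => /set0Pn [w /[!inE] /andP [wW /eqP <-]]; exists w.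
apply: leq_trans (_ : delta * \sum_v (#|fiber W I v| - 1) <= _).
  rewrite leq_mul2l leq_subLR (card_fibers W I) cardP -big_split /= leq_sum ?orbT //.
  by move=> v _; case: eqP => [->|]; rewrite //=; lia.
rewrite big_distrr /= leq_sum // => v _; apply: separated_class_bound.
by move=> x y /[!inE] /andP [xW _] /andP [yW _]; apply: sep.
Qed.

(** * Random samples of coordinates *)

Definition subsets (m : nat) := [set I : {set 'I_n} | #|I| == m].

Lemma card_subsets m : #|subsets m| = 'C(n, m).
Proof. by rewrite card_draws card_ord. Qed.

Lemma sum_subsets_exchange (g : {set 'I_n} -> 'I_n -> nat) m :
  \sum_(I in subsets m) \sum_(j | j \notin I) g I j =
  \sum_(J in subsets m.+1) \sum_(j in J) g (J :\ j) j.
Proof.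
rewrite (exchange_big_dep xpredT) //= [RHS](exchange_big_dep xpredT) //=.
apply: eq_bigr => j _.
rewrite [RHS](reindex_onto (fun I => j |: I) (fun J => J :\ j)) /=; last first.
  by move=> J /andP [_ jJ]; rewrite setD1K.
apply: eq_big => [I|I /andP [_ jI]]; last by rewrite setU1K.
rewrite setU11 andbT setU1D1_eq !inE cardsU1.
by case: (j \in I); rewrite /= ?andbF ?andbT ?add1n ?eqSS.
Qed.

Lemma sum_edge_count_le W d m : (forall S, shattered W S -> #|S| <= d) ->
  \sum_(J in subsets m) edge_count W J <= 'C(n, m) * (d * #|W|).
Proof.
move=> vc; rewrite -card_subsets -sum_nat_const leq_sum // => J _.
by rewrite edge_count_le // => S _; apply: vc.
Qed.

Lemma haussler_average delta d0 W m :
  0 < delta -> separated delta W -> (forall S, shattered W S -> #|S| <= d0) ->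
  4 * d0 * n <= delta * m.+1 ->
  'C(n, m) * #|W| <= 2 * \sum_(I in subsets m) #|proj W I|.
Proof.
move=> delta_gt0 sep vc hm.
set X := \sum_(I in subsets m) (#|W| - #|proj W I|).
have le_X : 'C(n, m) * #|W| <= X + \sum_(I in subsets m) #|proj W I|.
  by rewrite -card_subsets -sum_nat_const -big_split leq_sum //= => I _; lia.
have X_edges : delta * X <= 2 * ('C(n, m.+1) * (d0 * #|W|)).
  apply: leq_trans (_ : 2 * \sum_(J in subsets m.+1) edge_count W J <= _).
    rewrite -sum_subsets_exchange !big_distrr leq_sum //= => I _.
    exact: separated_proj_lower.
  by rewrite leq_mul2l sum_edge_count_le.
have binS : m.+1 * 'C(n, m.+1) <= n * 'C(n, m) by rewrite mul_bin_left leq_mul2r leq_subr orbT.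
have X_half : 2 * X <= 'C(n, m) * #|W|.
  rewrite -(@leq_pmul2l (delta * m.+1)) ?muln_gt0 ?delta_gt0 //.
  apply: leq_trans (_ : 4 * (m.+1 * 'C(n, m.+1)) * (d0 * #|W|) <= _).
    have := leq_mul (leqnn (2 * m.+1)) X_edges; clear le_X X_edges.
    by move: X 'C(n, m.+1) #|W| => x c1 w; lia.
  apply: leq_trans (_ : 4 * (n * 'C(n, m)) * (d0 * #|W|) <= _).
    by rewrite leq_mul2r leq_mul2l binS !orbT.
  apply: leq_trans (leq_mul hm (leqnn ('C(n, m) * #|W|))).
  by move: 'C(n, m) #|W| => c w; lia.
by move: le_X X_half; lia.
Qed.

Lemma sum_card_setI_subsetsS w m :
  \sum_(J in subsets m.+1) #|w :&: J| + \sum_(I in subsets m) #|w :&: I| = 'C(n, m) * #|w|.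
Proof.
have -> : \sum_(J in subsets m.+1) #|w :&: J| = \sum_(I in subsets m) #|w :\: I|.
  rewrite (eq_bigr (fun J => \sum_(j in J) (j \in w : nat))); last first.
    by move=> J _; rewrite sum_mem_card setIC.
  rewrite -(sum_subsets_exchange (fun _ j => (j \in w : nat))); apply: eq_bigr => I _.
  by rewrite setDE setIC -sum_mem_card; apply: eq_bigl => j; rewrite inE.
rewrite -card_subsets -sum_nat_const -big_split /=; apply: eq_bigr => I _.
by rewrite addnC cardsID.
Qed.

Lemma sum_card_setI_subsets w m :
  n * \sum_(I in subsets m) #|w :&: I| = 'C(n, m) * m * #|w|.
Proof.
elim: m => [|m IH].
  rewrite muln0 mul0n big1 ?muln0 // => I; rewrite inE => /eqP/cards0_eq ->.
  by rewrite setI0 cards0.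
have := sum_card_setI_subsetsS w m; have := mul_bin_left n m; move: IH.
move: (\sum_(I in subsets m) _) (\sum_(I in subsets m.+1) _) 'C(n, m) 'C(n, m.+1) #|w|.
by case: (leqP m n) => [mn|nm] T0 T1 c0 c1 x; [have -> : n = n - m + m by rewrite subnK|
  have -> : n - m = 0 by lia]; nia.
Qed.

Definition long_traces W I (k : nat) := [set w in W | k < #|w :&: I|].

Lemma card_proj_le V W I k : W \subset V ->
  #|proj W I| <= #|[set u in proj V I | vlen u <= k]| + #|long_traces W I k|.
Proof.
move=> WV; set short := [set u in proj V I | vlen u <= k].
have sub : proj W I \subset short :|: [set w :&: I | w in long_traces W I k].
  apply/subsetP => _ /imsetP [w wW ->]; rewrite !inE.
  case: (leqP #|w :&: I| k) => h.
    by rewrite andbT; apply/orP; left; apply/imsetP; exists w => //; apply: (subsetP WV).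
  by apply/orP; right; apply/imsetP; exists w => //; rewrite inE wW h.
apply: leq_trans (subset_leq_card sub) _.
by rewrite cardsU; apply: leq_trans (leq_subr _ _) _; rewrite leq_add2l leq_imset_card.
Qed.

(* Markov's inequality for the trace length [#|w :&: I|] of a random [m]-subset [I]. *)
Lemma long_traces_average W k k' m : {in W, forall w, #|w| <= k} ->
  m <= k' \/ 4 * k * m < n * k'.+1 ->
  4 * \sum_(I in subsets m) #|long_traces W I k'| <= 'C(n, m) * #|W|.
Proof.
move=> Wk [mk|hk].
  rewrite big1 ?muln0 // => I /[!inE] /eqP cI; apply/eqP; rewrite cards_eq0; apply/eqP/setP => w.
  by rewrite !inE ltnNge (leq_trans (subset_leq_card (subsetIr w I))) ?andbF // cI.
have per_w w : w \in W ->
    n * k'.+1 * \sum_(I in subsets m) (k' < #|w :&: I| : nat) <= 'C(n, m) * m * k.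
  move=> wW; apply: leq_trans (_ : n * \sum_(I in subsets m) #|w :&: I| <= _).
    rewrite -mulnA leq_mul2l big_distrr /= leq_sum ?orbT // => I _.
    by case: ltnP => h; rewrite ?muln1 ?muln0.
  by rewrite sum_card_setI_subsets leq_mul2l Wk ?orbT.
have -> : \sum_(I in subsets m) #|long_traces W I k'| =
          \sum_(w in W) \sum_(I in subsets m) (k' < #|w :&: I| : nat).
  rewrite exchange_big; apply: eq_bigr => I _.
  rewrite /long_traces setIdE -sum_mem_card.
  by apply: eq_bigr => w _; rewrite inE.
have npos : 0 < n * k'.+1 by apply: leq_ltn_trans hk.
rewrite -(leq_pmul2l npos) mulnCA.
apply: leq_trans (_ : 4 * (#|W| * ('C(n, m) * m * k)) <= _).
  by rewrite leq_mul2l big_distrr -sum_nat_const leq_sum ?orbT.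
by move: (ltnW hk); move: 'C(n, m) #|W| => c x; nia.
Qed.

Lemma exists_subset_short_traces delta d0 k k' m V W :
  0 < delta -> W \subset V -> separated delta W -> (forall S, shattered W S -> #|S| <= d0) ->
  {in W, forall w, #|w| <= k} -> 4 * d0 * n <= delta * m.+1 ->
  m <= k' \/ 4 * k * m < n * k'.+1 -> m <= n ->
  exists2 I, I \in subsets m & #|W| <= 4 * #|[set u in proj V I | vlen u <= k']|.
Proof.
move=> delta_gt0 WV sep vc Wk hm hk mn.
apply: exists_ge_average; first by rewrite card_subsets bin_gt0.
have avg_proj := haussler_average delta_gt0 sep vc hm.
have avg_long := long_traces_average Wk hk.
rewrite card_subsets -big_distrr /=; set short := \sum_(I in subsets m) _.
have split_proj : \sum_(I in subsets m) #|proj W I| <=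
    short + \sum_(I in subsets m) #|long_traces W I k'|.
  by rewrite /short -big_split leq_sum //= => I _; apply: card_proj_le.
move: avg_proj avg_long split_proj.
by move: ('C(n, m) * #|W|) (\sum_(I in subsets m) _) (\sum_(I in subsets m) _); lia.
Qed.

End Traces.

(** * Choice of the parameters and the bound *)

Lemma exists_sample_size n d0 delta : 4 * d0 < delta -> delta <= n ->
  exists m, [/\ 4 * d0 * n <= delta * m.+1, 0 < m <= n & m * delta <= (4 * d0 + 1) * n].
Proof.
move=> d0_lt le_n; exists (4 * d0 * n %/ delta).+1.
have := leq_divM (4 * d0 * n) delta.
have := @ltn_ceil (4 * d0 * n) delta (leq_ltn_trans (leq0n _) d0_lt).
by move: (4 * d0 * n %/ delta) => q hi lo; split; [lia | nia | lia].
Qed.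

Lemma exists_trace_threshold n k m delta c : 0 < n -> 0 < c -> 0 < m ->
  m * delta <= c * n -> delta <= 2 * k ->
  exists k', [/\ 0 < k' <= m, m <= k' \/ 4 * k * m < n * k'.+1 & k' * delta <= 4 * c * k].
Proof.
move=> n_gt0 c_gt0 m_gt0 hm hk; set t := 4 * k * m %/ n.
have lo : t * n <= 4 * k * m := leq_divM _ _.
have hi : 4 * k * m < t.+1 * n := ltn_ceil _ n_gt0.
exists (minn m (maxn 1 t)); split; first by lia.
  by case: (leqP m (maxn 1 t)) => h; [left | right]; nia.
have [t0|t_gt0] := posnP t.
  apply: leq_trans (_ : 1 * delta <= _); last by nia.
  by rewrite leq_mul2r; apply/orP; right; lia.
apply: leq_trans (_ : t * delta <= _).
  by rewrite leq_mul2r; apply/orP; right; lia.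
rewrite -(leq_pmul2r n_gt0); apply: leq_trans (_ : 4 * k * (m * delta) <= _).
  by rewrite mulnAC (mulnA _ m) leq_mul2r lo orbT.
by have := leq_mul (leqnn (4 * k)) hm; rewrite !mulnA (mulnAC 4 k c).
Qed.

Lemma exists_short_trace_sample n d0 delta k (V W : {set {set 'I_n}}) :
  W \subset V -> separated delta W -> (forall S, shattered W S -> #|S| <= d0) ->
  {in W, forall w : {set 'I_n}, #|w| <= k} ->
  0 < delta -> delta <= n -> 0 < k -> k <= n -> delta <= 2 * k ->
  exists (I : {set 'I_n}) k',
    [/\ 0 < k' <= #|I|, #|I| * delta <= (16 * d0 + 4) * n, k' * delta <= (16 * d0 + 4) * k
       & #|W| <= 4 * #|[set u in proj V I | vlen u <= k']|].
Proof.
move=> WV sep vc Wk delta_gt0 delta_n k_gt0 k_n delta_k.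
have [delta_small|delta_large] := leqP delta (4 * d0).
  exists setT, k; rewrite cardsT card_ord k_gt0 k_n; split => //;
    try by rewrite mulnC leq_mul2r; apply/orP; right; lia.
  apply: (leq_trans _ (leq_pmull _ (isT : 0 < 4))); apply: subset_leq_card.
  apply/subsetP => w wW.
  by rewrite inE /vlen Wk // andbT; apply/imsetP; exists w; rewrite ?setIT ?(subsetP WV).
have [m [hm /andP [m_gt0 m_n] m_delta]] := exists_sample_size delta_large delta_n.
have [k' [k'_bnd hk k'_delta]] := exists_trace_threshold (leq_trans delta_gt0 delta_n)
  (ltn_addl _ (ltnSn 0) : 0 < 4 * d0 + 1) m_gt0 m_delta delta_k.
have [I /[!inE] /eqP cI short] := exists_subset_short_traces delta_gt0 WV sep vc Wk hm hk m_n.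
exists I, k'; rewrite cI; split => //.
  by apply: leq_trans m_delta _; rewrite leq_mul2r; apply/orP; right; lia.
by apply: leq_trans k'_delta _; rewrite leq_mul2r; apply/orP; right; lia.
Qed.

Lemma Mpack_witness n delta k (V : {set {set 'I_n}}) :
  exists2 W : {set {set 'I_n}},
    [/\ W \subset V, separated delta W & {in W, forall w : {set 'I_n}, vlen w <= k}]
    & #|W| = Mpack delta k V.
Proof.
set P := fun W : {set {set 'I_n}} =>
  (W \subset V) && separated delta W && [forall v in W, vlen v <= k].
have P_gt0 : 0 < #|P|.
  apply/card_gt0P; exists set0; rewrite unfold_in /P sub0set.
  by apply/andP; split; apply/forallP => x; rewrite inE.
have -> : Mpack delta k V = \max_(W in P) #|W| by apply: eq_bigl.
have [W PW ->] := eq_bigmax_cond (fun W : {set {set 'I_n}} => #|W|) P_gt0.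
move: PW; rewrite unfold_in => /andP [/andP [WV sep] /forall_inP Wk]; exists W => //.
Qed.

Lemma shattered_le_vcdim n (V W : {set {set 'I_n}}) S :
  W \subset V -> shattered W S -> #|S| <= vcdim V.
Proof. by move=> WV sh; apply: leq_bigmax_cond; apply: shattered_subset WV sh. Qed.

Local Open Scope R_scope.

Lemma leq_of_INR_le_div_pow2 (x y e : nat) : INR x <= INR y / 2 ^ e -> (x <= y)%N.
Proof.
move=> h; apply/leP/INR_le; apply: (Rle_trans _ _ _ h).
have p_ge1 : 1 <= 2 ^ e by apply: pow_R1_Rle; lra.
have := pos_INR y; have : INR y / 2 ^ e * 2 ^ e = INR y by field; lra.
nra.
Qed.

Lemma Rpower_scale_le (x y X Y t d1 : R) (d : nat) :
  0 < x -> 0 < y -> 0 < t -> 0 <= d1 <= INR d -> x <= t * X -> y <= t * Y ->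
  Rpower x d1 * Rpower y (INR d - d1) <= t ^ d * (Rpower X d1 * Rpower Y (INR d - d1)).
Proof.
move=> x_gt0 y_gt0 t_gt0 [d1_ge0 d1_le] hx hy.
have X_gt0 : 0 < X by nra.
have Y_gt0 : 0 < Y by nra.
have -> : t ^ d * (Rpower X d1 * Rpower Y (INR d - d1)) =
          Rpower (t * X) d1 * Rpower (t * Y) (INR d - d1).
  rewrite -!Rpower_mult_distr // -Rpower_pow // -{1}(Rplus_minus d1 (INR d)) Rpower_plus.
  ring.
apply: Rmult_le_compat; try by apply: Rlt_le; apply: exp_pos.
  by apply: Rle_Rpower_l; lra.
by apply: Rle_Rpower_l; lra.
Qed.

Lemma clarkson_shor_sample_le n (V : {set {set 'I_n}}) d d1 C (I : {set 'I_n})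
    (k' delta a k : nat) :
  clarkson_shor V d d1 C -> 0 < C -> 0 <= d1 <= INR d ->
  (0 < k' <= #|I|)%N -> (0 < delta)%N -> (0 < a)%N ->
  (#|I| * delta <= a * n)%N -> (k' * delta <= a * k)%N ->
  INR #|[set u in proj V I | (vlen u <= k')%N]| <=
  C * INR a ^ d * (Rpower (INR n) d1 * Rpower (INR k) (INR d - d1) / INR delta ^ d).
Proof.
move=> cs C_gt0 d1_bnd /andP [k'_gt0 k'_I] delta_gt0 a_gt0 I_delta k'_delta.
apply: Rle_trans (cs I k' k'_gt0 k'_I) _.
have INR_gt0 x : (0 < x)%N -> 0 < INR x by move=> /ltP; apply: lt_0_INR.
have delta_pos := INR_gt0 _ delta_gt0.
have t_gt0 : 0 < INR a / INR delta by apply: Rdiv_lt_0_compat => //; apply: INR_gt0.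
have scale (x y : nat) : (x * delta <= a * y)%N -> INR x <= INR a / INR delta * INR y.
  move=> /leP /le_INR; rewrite !mult_INR => h.
  apply: (Rmult_le_reg_r (INR delta)) => //.
  by have -> : INR a / INR delta * INR y * INR delta = INR a * INR y by field; lra.
have := Rpower_scale_le (INR_gt0 _ (leq_trans k'_gt0 k'_I)) (INR_gt0 _ k'_gt0) t_gt0
  d1_bnd (scale _ _ I_delta) (scale _ _ k'_delta).
move=> h; rewrite !Rmult_assoc; apply: Rmult_le_compat_l; first lra.
apply: (Rle_trans _ _ _ h); right; rewrite /Rdiv Rpow_mult_distr pow_inv; ring.
Qed.

Theorem theorem2 :
  forall (d : nat) (C : R) (d0 : nat),
    (0 < d)%N -> 0 < C ->
    exists c : R, 0 < c /\
      forall (d1 : R) (n : nat) (V : {set {set 'I_n}}) (delta k : nat),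
        1 <= d1 -> d1 <= INR d ->
        (1 <= n)%N ->
        clarkson_shor V d d1 C ->
        vcdim V = d0 ->
        (1 <= delta)%N -> INR delta <= INR n / 2 ^ (d0 + 1) ->
        (1 <= k)%N -> (k <= n)%N -> (delta <= 2 * k)%N ->
        INR (Mpack delta k V)
          <= c * (Rpower (INR n) d1 * Rpower (INR k) (INR d - d1)
                  / INR delta ^ d).
Proof.
move=> d C d0 _ C_gt0; have a_gt0 : (0 < 16 * d0 + 4)%N by rewrite addn4.
exists (4 * C * INR (16 * d0 + 4) ^ d); split.
  by apply: Rmult_lt_0_compat; [lra | apply/pow_lt/lt_0_INR/ltP].
move=> d1 n V delta k d1_ge1 d1_le _ cs vc delta_gt0 delta_le k_gt0 k_le delta_k.
have [W [WV sep Wk] <-] := Mpack_witness delta k V.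
have vcW S : shattered W S -> (#|S| <= d0)%N by rewrite -vc; apply: shattered_le_vcdim.
have delta_n := leq_of_INR_le_div_pow2 delta_le.
have [I [k' [k'_bnd I_delta k'_delta short]]] :=
  exists_short_trace_sample WV sep vcW Wk delta_gt0 delta_n k_gt0 k_le delta_k.
have d1_bnd : 0 <= d1 <= INR d by lra.
have := clarkson_shor_sample_le cs C_gt0 d1_bnd k'_bnd delta_gt0 a_gt0 I_delta k'_delta.
have := le_INR _ _ (leP short); rewrite mult_INR /=; lra.
Qed.
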